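(* Let $\mathbb{C}$ be a pointed protomodular category. An object $X$ of $\mathbb{C}$ is strong-complete if and only if $X$ is proto-complete and has trivial center.
   Context: $\mathbb{C}$ is pointed with finite limits; it is protomodular if the split short five lemma holds (for a morphism of split extensions whose kernel and codomain components are isomorphisms, the middle component is an isomorphism). A protosplit monomorphism is a kernel of a split epimorphism. An object $X$ is proto-complete if every protosplit monomorphism with domain $X$ is a split monomorphism, and strong-complete if every protosplit monomorphism with domain $X$ is a split monomorphism with a unique section (retraction). The center of $X$ is the terminal object among morphisms $g:B\to X$ commuting with $1_X$ (i.e. such that some $\varphi:B\times X\to X$ has $\varphi\langle1,0\rangle=g$, $\varphi\langle0,1\rangle=1_X$), with morphisms being maps over $X$; $X$ has trivial center if the center is the zero object. *)

Set Implicit Arguments.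

Record Category := {
  Ob :> Type;
  Hom : Ob -> Ob -> Type;
  idm : forall A, Hom A A;
  comp : forall A B C, Hom B C -> Hom A B -> Hom A C;
  comp_assoc : forall A B C D (h : Hom C D) (g : Hom B C) (f : Hom A B),
      comp h (comp g f) = comp (comp h g) f;
  comp_id_l : forall A B (f : Hom A B), comp (idm B) f = f;
  comp_id_r : forall A B (f : Hom A B), comp f (idm A) = f
}.

Arguments Hom {c} _ _.
Arguments idm {c} _.
Arguments comp {c A B C} _ _.
Notation "g \o f" := (comp g f) (at level 40, left associativity).

Section Defs.
Variable C : Category.

Definition is_iso {A B : C} (f : Hom A B) : Prop :=
  exists g : Hom B A, g \o f = idm A /\ f \o g = idm B.

Definition is_initial (I : C) : Prop := forall A : C, exists! f : Hom I A, True.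
Definition is_terminal (T : C) : Prop := forall A : C, exists! f : Hom A T, True.
Definition is_zero_obj (Z : C) : Prop := is_initial Z /\ is_terminal Z.

Definition pointed : Prop := exists Z : C, is_zero_obj Z.

Definition is_zero_mor {A B : C} (f : Hom A B) : Prop :=
  exists (Z : C) (a : Hom A Z) (b : Hom Z B), is_zero_obj Z /\ f = b \o a.

Definition is_product (A B P : C) (p1 : Hom P A) (p2 : Hom P B) : Prop :=
  forall (Y : C) (f : Hom Y A) (g : Hom Y B),
    exists! h : Hom Y P, p1 \o h = f /\ p2 \o h = g.

Definition is_pullback {A B D P : C} (f : Hom A D) (g : Hom B D)
    (p1 : Hom P A) (p2 : Hom P B) : Prop :=
  f \o p1 = g \o p2 /\
  forall (Y : C) (u : Hom Y A) (v : Hom Y B), f \o u = g \o v ->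
    exists! h : Hom Y P, p1 \o h = u /\ p2 \o h = v.

Definition has_finite_limits : Prop :=
  (exists T : C, is_terminal T) /\
  (forall (A B D : C) (f : Hom A D) (g : Hom B D),
     exists (P : C) (p1 : Hom P A) (p2 : Hom P B), is_pullback f g p1 p2).

Definition is_kernel {K A B : C} (k : Hom K A) (p : Hom A B) : Prop :=
  is_zero_mor (p \o k) /\
  forall (Y : C) (f : Hom Y A), is_zero_mor (p \o f) ->
    exists! g : Hom Y K, k \o g = f.

Definition split_extension {K A B : C} (k : Hom K A) (p : Hom A B) (s : Hom B A)
  : Prop := p \o s = idm B /\ is_kernel k p.

(* protomodular: split short five lemma *)
Definition protomodular : Prop :=
  forall (K A B K' A' B' : C)
         (k : Hom K A) (p : Hom A B) (s : Hom B A)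
         (k' : Hom K' A') (p' : Hom A' B') (s' : Hom B' A')
         (u : Hom K K') (v : Hom A A') (w : Hom B B'),
    split_extension k p s -> split_extension k' p' s' ->
    v \o k = k' \o u -> p' \o v = w \o p -> v \o s = s' \o w ->
    is_iso u -> is_iso w -> is_iso v.

Definition protosplit_mono {X A : C} (m : Hom X A) : Prop :=
  exists (B : C) (p : Hom A B) (s : Hom B A), p \o s = idm B /\ is_kernel m p.

Definition proto_complete (X : C) : Prop :=
  forall (A : C) (m : Hom X A), protosplit_mono m ->
    exists r : Hom A X, r \o m = idm X.

Definition strong_complete (X : C) : Prop :=
  forall (A : C) (m : Hom X A), protosplit_mono m ->
    exists! r : Hom A X, r \o m = idm X.

Definition commute_mor {B Y X : C} (g : Hom B X) (f : Hom Y X) : Prop :=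
  exists (P : C) (p1 : Hom P B) (p2 : Hom P Y)
         (i1 : Hom B P) (i2 : Hom Y P) (phi : Hom P X),
    is_product B Y P p1 p2 /\
    p1 \o i1 = idm B /\ is_zero_mor (p2 \o i1) /\
    is_zero_mor (p1 \o i2) /\ p2 \o i2 = idm Y /\
    phi \o i1 = g /\ phi \o i2 = f.

(* z : Z -> X is the center of X: terminal among morphisms commuting with 1_X,
   morphisms being maps over X. *)
Definition is_center (X Z : C) (z : Hom Z X) : Prop :=
  commute_mor z (idm X) /\
  forall (B : C) (g : Hom B X), commute_mor g (idm X) ->
    exists! t : Hom B Z, z \o t = g.

Definition trivial_center (X : C) : Prop :=
  exists (Z : C) (z : Hom Z X), is_zero_obj Z /\ is_center X Z z.

End Defs.

Arguments is_iso {C A B} _.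
Arguments is_zero_obj {C} _.
Arguments is_zero_mor {C A B} _.
Arguments is_kernel {C K A B} _ _.
Arguments protosplit_mono {C X A} _.
Arguments proto_complete {C} _.
Arguments strong_complete {C} _.
Arguments commute_mor {C B Y X} _ _.
Arguments is_center {C} _ _ _.
Arguments trivial_center {C} _.


(* If X is strong-complete and g : B -> X cooperates with 1_X through
   phi : B x X -> X, then phi and the second projection are both retractions of
   the protosplit injection X -> B x X, so they coincide and g = phi <1,0> is
   zero: the center is trivial.  Conversely, let m : X -> A be the kernel of p
   split by s, with a retraction r.  By protomodularity <p, r> : A -> B x X is
   an isomorphism carrying m to the injection of X, so every retraction r' of m
   transports to a retraction phi of that injection.  Then phi <1,0> cooperates
   with 1_X, hence is zero, so phi agrees with the second projection on both
   injections; these are jointly epic in a protomodular category, whence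
   r' = r. *)

Section ZeroMorphisms.
Context {C : Category}.

Lemma initial_hom_unique {O B : C} (f g : Hom O B) : is_initial C O -> f = g.
Proof.
  intros HI; destruct (HI B) as [x [_ Hx]].
  rewrite <- (Hx f I), <- (Hx g I); reflexivity.
Qed.

Lemma terminal_hom_unique {T B : C} (f g : Hom B T) : is_terminal C T -> f = g.
Proof.
  intros HT; destruct (HT B) as [x [_ Hx]].
  rewrite <- (Hx f I), <- (Hx g I); reflexivity.
Qed.

Lemma zero_obj_zero_mor {Z A B : C} (a : Hom A Z) (b : Hom Z B) :
  is_zero_obj Z -> is_zero_mor (b \o a).
Proof. intros HZ; exists Z, a, b; auto. Qed.

Lemma zero_mor_comp_r {A B D : C} {f : Hom B D} (h : Hom A B) :
  is_zero_mor f -> is_zero_mor (f \o h).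
Proof.
  intros (Z & a & b & HZ & ->); exists Z, (a \o h), b.
  split; [exact HZ | symmetry; apply comp_assoc].
Qed.

Lemma zero_mor_unique {A B : C} (f g : Hom A B) :
  is_zero_mor f -> is_zero_mor g -> f = g.
Proof.
  intros (Z & a & b & [HZi HZt] & ->) (Z' & a' & b' & [HZi' HZt'] & ->).
  destruct (HZi Z') as [c _].
  rewrite (terminal_hom_unique a' (c \o a) HZt').
  rewrite (initial_hom_unique b (b' \o c) HZi).
  symmetry; apply comp_assoc.
Qed.

End ZeroMorphisms.

Section Monomorphisms.
Context {C : Category}.

Definition monic {A B : C} (e : Hom A B) : Prop :=
  forall (W : C) (a b : Hom W A), e \o a = e \o b -> a = b.

Definition is_equalizer {E A Y : C} (f g : Hom A Y) (e : Hom E A) : Prop :=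
  f \o e = g \o e /\
  forall (W : C) (h : Hom W A), f \o h = g \o h -> exists! k : Hom W E, e \o k = h.

Lemma equalizer_monic {E A Y : C} {f g : Hom A Y} {e : Hom E A} :
  is_equalizer f g e -> monic e.
Proof.
  intros [He Hu] W a b Hab.
  destruct (Hu W (e \o a)) as [k [_ Hk]].
  - rewrite !comp_assoc, He; reflexivity.
  - rewrite <- (Hk a), <- (Hk b); auto.
Qed.

Lemma iso_cancel_r {A B D : C} {t : Hom A B} {f g : Hom B D} :
  is_iso t -> f \o t = g \o t -> f = g.
Proof.
  intros [t' [_ Htt']] E.
  rewrite <- (comp_id_r _ _ _ f), <- (comp_id_r _ _ _ g), <- Htt', !comp_assoc, E.
  reflexivity.
Qed.

Lemma kernel_through_monic {K E A B : C} {e : Hom E A} {j : Hom K E} {q : Hom A B} :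
  monic e -> is_kernel (e \o j) q -> is_kernel j (q \o e).
Proof.
  intros Me [Hz Hu]; split.
  - rewrite <- comp_assoc; exact Hz.
  - intros W h Hh; rewrite <- comp_assoc in Hh.
    destruct (Hu W (e \o h) Hh) as [g [Hg Hgu]].
    exists g; split.
    + apply Me; rewrite comp_assoc; exact Hg.
    + intros g' Hg'; apply Hgu; rewrite <- Hg', comp_assoc; reflexivity.
Qed.

End Monomorphisms.

Section Products.
Context {C : Category}.

Lemma product_hom_ext {A B P Y : C} {p1 : Hom P A} {p2 : Hom P B} (a b : Hom Y P) :
  is_product C A B P p1 p2 -> p1 \o a = p1 \o b -> p2 \o a = p2 \o b -> a = b.
Proof.
  intros HP E1 E2; destruct (HP Y (p1 \o a) (p2 \o a)) as [h [_ Hh]].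
  rewrite <- (Hh a), <- (Hh b); auto.
Qed.

Lemma product_exists (A B : C) :
  has_finite_limits C -> exists P p1 p2, is_product C A B P p1 p2.
Proof.
  intros [[T HT] HPB].
  destruct (HT A) as [ta _], (HT B) as [tb _].
  destruct (HPB A B T ta tb) as (P & p1 & p2 & _ & Hu).
  exists P, p1, p2; intros Y f g; apply Hu; apply (terminal_hom_unique _ _ HT).
Qed.

(* The equalizer of f, g : A -> Y is the pullback of <1,f> and <1,g>. *)
Lemma equalizer_exists {A Y : C} (f g : Hom A Y) :
  has_finite_limits C -> exists (E : C) (e : Hom E A), is_equalizer f g e.
Proof.
  intros HL; destruct (product_exists A Y HL) as (Q & q1 & q2 & HQ).
  destruct (HQ A (idm A) f) as [hf [[Hf1 Hf2] _]].
  destruct (HQ A (idm A) g) as [hg [[Hg1 Hg2] _]].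
  destruct HL as [_ HPB]; destruct (HPB _ _ _ hf hg) as (E & e1 & e2 & Hc & Hu).
  assert (He : e1 = e2).
  { assert (H : q1 \o (hf \o e1) = q1 \o (hg \o e2)) by (rewrite Hc; reflexivity).
    rewrite !comp_assoc, Hf1, Hg1, !comp_id_l in H; exact H. }
  exists E, e1; split.
  - assert (H : q2 \o (hf \o e1) = q2 \o (hg \o e2)) by (rewrite Hc; reflexivity).
    rewrite !comp_assoc, Hf2, Hg2 in H; rewrite H, He; reflexivity.
  - intros W h Hh.
    assert (H : hf \o h = hg \o h).
    { apply (product_hom_ext _ _ HQ).
      - rewrite !comp_assoc, Hf1, Hg1; reflexivity.
      - rewrite !comp_assoc, Hf2, Hg2; exact Hh. }
    destruct (Hu W h h H) as [k [[Hk1 _] Hku]].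
    exists k; split; [exact Hk1|].
    intros k' Hk'; apply Hku; split; [exact Hk' | rewrite <- He; exact Hk'].
Qed.

Lemma product_injections_exist {Z0 A B P : C} {p1 : Hom P A} {p2 : Hom P B} :
  is_zero_obj Z0 -> is_product C A B P p1 p2 ->
  exists (i1 : Hom A P) (i2 : Hom B P),
    p1 \o i1 = idm A /\ is_zero_mor (p2 \o i1) /\
    is_zero_mor (p1 \o i2) /\ p2 \o i2 = idm B.
Proof.
  intros HZ0 HP.
  destruct (proj1 HZ0 A) as [zA _], (proj1 HZ0 B) as [zB _].
  destruct (proj2 HZ0 A) as [aA _], (proj2 HZ0 B) as [aB _].
  destruct (HP A (idm A) (zB \o aA)) as [i1 [[H11 H21] _]].
  destruct (HP B (zA \o aB) (idm B)) as [i2 [[H12 H22] _]].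
  exists i1, i2; rewrite H21, H12.
  repeat split; auto; apply zero_obj_zero_mor; exact HZ0.
Qed.

Lemma product_inr_kernel {A B P : C} {p1 : Hom P A} {p2 : Hom P B} {i2 : Hom B P} :
  is_product C A B P p1 p2 -> is_zero_mor (p1 \o i2) -> p2 \o i2 = idm B ->
  is_kernel i2 p1.
Proof.
  intros HP Hz Hi; split; [exact Hz|].
  intros Y h Hh; exists (p2 \o h); split.
  - apply (product_hom_ext _ _ HP).
    + rewrite comp_assoc; apply zero_mor_unique; [apply zero_mor_comp_r|]; assumption.
    + rewrite comp_assoc, Hi, comp_id_l; reflexivity.
  - intros g Hg; rewrite <- Hg, comp_assoc, Hi, comp_id_l; reflexivity.
Qed.

End Products.

Definition commute_with_id_zero {C : Category} (X : C) : Prop :=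
  forall (B : C) (g : Hom B X), commute_mor g (idm X) -> is_zero_mor g.

Section Protomodular.
Context {C : Category}.
Hypothesis HL : has_finite_limits C.
Hypothesis PM : protomodular C.

Lemma split_extension_map_iso {K A A' B : C} {k : Hom K A} {p : Hom A B}
    {s : Hom B A} {k' : Hom K A'} {p' : Hom A' B} {v : Hom A A'} :
  split_extension C k p s -> is_kernel k' p' -> v \o k = k' -> p' \o v = p ->
  is_iso v.
Proof.
  intros Hs Hk' Hvk Hpv.
  apply (PM _ _ _ _ _ _ k p s k' p' (v \o s) (idm K) v (idm B)); auto.
  - split; [rewrite comp_assoc, Hpv; apply (proj1 Hs) | exact Hk'].
  - rewrite comp_id_r; exact Hvk.
  - rewrite comp_id_l; exact Hpv.
  - rewrite comp_id_r; reflexivity.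
  - exists (idm K); split; apply comp_id_l.
  - exists (idm B); split; apply comp_id_l.
Qed.

(* The equalizer of two maps agreeing on both injections contains them and is
   therefore an isomorphism, by the split short five lemma. *)
Lemma product_injections_jointly_epic {B X P Y : C} {p1 : Hom P B} {p2 : Hom P X}
    {i1 : Hom B P} {i2 : Hom X P} {f g : Hom P Y} :
  is_product C B X P p1 p2 ->
  p1 \o i1 = idm B -> is_zero_mor (p1 \o i2) -> p2 \o i2 = idm X ->
  f \o i1 = g \o i1 -> f \o i2 = g \o i2 -> f = g.
Proof.
  intros HP H11 H12 H22 E1 E2.
  destruct (equalizer_exists f g HL) as (E & e & Heq).
  destruct (proj2 Heq B i1 E1) as [j1 [Hj1 _]].
  destruct (proj2 Heq X i2 E2) as [j2 [Hj2 _]].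
  assert (Hj2ker : is_kernel j2 (p1 \o e)).
  { apply kernel_through_monic; [exact (equalizer_monic Heq)|].
    rewrite Hj2; exact (product_inr_kernel HP H12 H22). }
  assert (Hsplit : split_extension C j2 (p1 \o e) j1)
    by (split; [rewrite <- comp_assoc, Hj1; exact H11 | exact Hj2ker]).
  pose proof (split_extension_map_iso Hsplit (product_inr_kernel HP H12 H22)
                Hj2 eq_refl) as Hiso.
  apply (iso_cancel_r Hiso), (proj1 Heq).
Qed.

Lemma product_retraction_eq_snd {B X P : C} {pB : Hom P B} {pX : Hom P X}
    {iB : Hom B P} {iX : Hom X P} {phi : Hom P X} :
  is_product C B X P pB pX ->
  pB \o iB = idm B -> is_zero_mor (pX \o iB) ->
  is_zero_mor (pB \o iX) -> pX \o iX = idm X ->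
  commute_with_id_zero X ->
  phi \o iX = idm X -> phi = pX.
Proof.
  intros HP HiB HiB0 HiX0 HiX Hzero Hphi.
  apply (product_injections_jointly_epic HP HiB HiX0 HiX); [|congruence].
  apply zero_mor_unique; [|exact HiB0].
  apply Hzero; exists P, pB, pX, iB, iX, phi; repeat split; auto.
Qed.

End Protomodular.

Section Center.
Context {C : Category}.

Lemma commute_mor_from_zero_obj {Z0 Y X : C} (z : Hom Z0 X) (f : Hom Y X) :
  is_zero_obj Z0 -> commute_mor z f.
Proof.
  intros [HZi HZt].
  destruct (HZt Y) as [q _], (HZi Y) as [i _].
  exists Y, q, (idm Y), i, (idm Y), f.
  assert (Hq : forall (W : C) (a b : Hom W Z0), a = b)
    by (intros; apply (terminal_hom_unique _ _ HZt)).
  repeat split.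
  - intros W a b; exists b; split.
    + split; [apply Hq | apply comp_id_l].
    + intros h [_ Hh]; rewrite <- Hh, comp_id_l; reflexivity.
  - apply Hq.
  - rewrite comp_id_l, <- (comp_id_r _ _ _ i); apply zero_obj_zero_mor; split; assumption.
  - rewrite comp_id_r, <- (comp_id_l _ _ _ q); apply zero_obj_zero_mor; split; assumption.
  - apply comp_id_l.
  - apply (initial_hom_unique _ _ HZi).
  - apply comp_id_r.
Qed.

Lemma trivial_center_iff_commute_zero {Z0 : C} (X : C) :
  is_zero_obj Z0 ->
  trivial_center X <-> commute_with_id_zero X.
Proof.
  intros HZ0; split.
  - intros (Z & z & HZ & _ & Hcent) B g Hg.
    destruct (Hcent B g Hg) as [t [<- _]].
    apply zero_obj_zero_mor; exact HZ.
  - intros Hzero; destruct (proj1 HZ0 X) as [z _].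
    exists Z0, z; split; [exact HZ0|]; split.
    + apply commute_mor_from_zero_obj; exact HZ0.
    + intros B g Hg; destruct (proj2 HZ0 B) as [t _]; exists t; split.
      * apply zero_mor_unique; [apply zero_obj_zero_mor; exact HZ0 | exact (Hzero B g Hg)].
      * intros t' _; apply (terminal_hom_unique _ _ (proj2 HZ0)).
Qed.

Lemma strong_complete_proto_complete {X : C} : strong_complete X -> proto_complete X.
Proof. intros SC A m Hm; destruct (SC A m Hm) as [r [Hr _]]; exists r; exact Hr. Qed.

Lemma strong_complete_commute_zero {X : C} :
  strong_complete X -> commute_with_id_zero X.
Proof.
  intros SC B g (P & p1 & p2 & i1 & i2 & phi & HP & H11 & H21 & H12 & H22 & <- & Hphi).
  assert (Hm : protosplit_mono i2)
    by (exists B, p1, i1; split; [exact H11 | exact (product_inr_kernel HP H12 H22)]).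
  destruct (SC P i2 Hm) as [r [_ Hr]].
  replace phi with p2 by (rewrite <- (Hr p2 H22); exact (Hr phi Hphi)).
  exact H21.
Qed.

Lemma proto_complete_commute_zero_strong_complete {Z0 X : C} :
  is_zero_obj Z0 -> has_finite_limits C -> protomodular C ->
  proto_complete X ->
  commute_with_id_zero X ->
  strong_complete X.
Proof.
  intros HZ0 HL PM PC Hzero A m Hm.
  destruct (PC A m Hm) as [r Hr]; exists r; split; [exact Hr|]; intros r' Hr'.
  destruct Hm as (B & p & s & Hps & Hker).
  destruct (product_exists B X HL) as (P & pB & pX & HP).
  destruct (product_injections_exist HZ0 HP) as (iB & iX & HiB & HiB0 & HiX0 & HiX).
  destruct (HP A p r) as [v [[Hv1 Hv2] _]].
  assert (Hvm : v \o m = iX).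
  { apply (product_hom_ext _ _ HP).
    - rewrite comp_assoc, Hv1; apply zero_mor_unique; [exact (proj1 Hker) | exact HiX0].
    - rewrite comp_assoc, Hv2, Hr, HiX; reflexivity. }
  pose proof (split_extension_map_iso PM (conj Hps Hker)
                (product_inr_kernel HP HiX0 HiX) Hvm Hv1) as [t [Htv Hvt]].
  assert (Hretr : forall r0 : Hom A X, r0 \o m = idm X -> r0 \o t = pX).
  { intros r0 Hr0; apply (product_retraction_eq_snd HL PM HP HiB HiB0 HiX0 HiX Hzero).
    rewrite <- Hvm, <- comp_assoc, (comp_assoc _ _ _ _ _ t v m), Htv, comp_id_l; exact Hr0. }
  apply (iso_cancel_r (t := t)); [exists v; split; assumption|].
  rewrite (Hretr r Hr); symmetry; exact (Hretr r' Hr').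
Qed.

End Center.

Theorem proposition4p5 (C : Category) :
  pointed C -> has_finite_limits C -> protomodular C ->
  forall X : C, strong_complete X <-> (proto_complete X /\ trivial_center X).
Proof.
  intros [Z0 HZ0] HL PM X.
  pose proof (trivial_center_iff_commute_zero X HZ0) as [Hcenter_zero Hzero_center].
  split.
  - intros SC; split.
    + exact (strong_complete_proto_complete SC).
    + exact (Hzero_center (strong_complete_commute_zero SC)).
  - intros [PC Hcenter].
    exact (proto_complete_commute_zero_strong_complete HZ0 HL PM PC
             (Hcenter_zero Hcenter)).
Qed.
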